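(* Let $w:\{0,1\}^L\to\mathbb{R}_{\ge 0}$ be a generic fitness landscape that induces the standard staircase triangulation, with genotypes written as subsets of $\{1,\dots,L\}$. Then: (i) if a single mutant $\{i\}$ is a peak, then every other peak contains $i$; in particular, two distinct single mutants cannot both be peaks; (ii) for distinct $i,j,k$, the double mutants $\{i,j\}$ and $\{j,k\}$ cannot both be peaks; (iii) for distinct $i,j,k,l$, the triple mutant $\{i,j,k\}$ and the double mutant $\{k,l\}$ cannot both be peaks.
   Context: A genotype $g\in\{0,1\}^L$ is identified with the set $\{i: g_i=1\}\subseteq\{1,\dots,L\}$ and with a vertex of $[0,1]^L$. The triangulation induced by $w$ is the regular subdivision of $[0,1]^L$ obtained by projecting the upper faces of $\mathrm{conv}\{(g,w_g)\}\subset\mathbb{R}^{L+1}$; $w$ is generic if all $w_g$ are distinct and this subdivision is a triangulation. A peak is a genotype all of whose Hamming neighbours (sets differing in exactly one element) have strictly lower fitness. The standard staircase triangulation consists of the $L!$ simplices $\{g_0\subset g_1\subset\dots\subset g_L\}$ with $g_0=\emptyset$, $g_L=\{1,\dots,L\}$ and $|g_k|=k$. *)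

From HB Require Import structures.
From mathcomp Require Import all_boot all_order all_algebra.
Set Implicit Arguments. Unset Strict Implicit. Unset Printing Implicit Defensive.
Import Order.TTheory GRing.Theory Num.Theory.
Local Open Scope ring_scope.

(* Genotypes of length L: subsets of 'I_L (locus i in 'I_L is locus i+1 of the paper);
   a genotype g is the 0/1 vertex of [0,1]^L with coordinates 1 exactly on g. *)

Definition aff_at (R : realFieldType) (L : nat) (a : 'I_L -> R) (b : R)
  (g : {set 'I_L}) : R := b + \sum_(i in g) a i.

(* S is (the vertex set of) a cell of the regular subdivision induced by w:
   the projection of an upper face of conv{(g, w g)}, i.e. there is a
   non-vertical hyperplane y = b + a.x lying weakly above all lifted points
   and touching exactly the lifted points of S. *)
Definition is_cell (R : realFieldType) (L : nat) (w : {set 'I_L} -> R)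
  (S : {set {set 'I_L}}) : Prop :=
  exists (a : 'I_L -> R) (b : R),
    (forall g, w g <= aff_at a b g) /\ S = [set g | aff_at a b g == w g].

Definition is_max_cell (R : realFieldType) (L : nat) (w : {set 'I_L} -> R)
  (S : {set {set 'I_L}}) : Prop :=
  is_cell w S /\ (forall T, is_cell w T -> S \subset T -> T = S).

(* Generic: all w g distinct and the subdivision is a triangulation (every
   full-dimensional cell of the L-cube has exactly L+1 vertices, i.e. is a simplex). *)
Definition generic (R : realFieldType) (L : nat) (w : {set 'I_L} -> R) : Prop :=
  injective w /\ (forall S, is_max_cell w S -> #|S| = L.+1).

Definition staircase_simplex (L : nat) (S : {set {set 'I_L}}) : Prop :=
  exists g : 'I_L.+1 -> {set 'I_L},
    (forall k, #|g k| = k :> nat) /\ (forall k l : 'I_L.+1, (k <= l)%N -> g k \subset g l)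
    /\ S = [set g k | k : 'I_L.+1].

Definition induces_staircase (R : realFieldType) (L : nat) (w : {set 'I_L} -> R) : Prop :=
  forall S, is_max_cell w S <-> staircase_simplex S.

Definition flip (L : nat) (g : {set 'I_L}) (i : 'I_L) : {set 'I_L} :=
  if i \in g then g :\ i else i |: g.

Definition is_peak (R : realFieldType) (L : nat) (w : {set 'I_L} -> R)
  (g : {set 'I_L}) : Prop :=
  forall i : 'I_L, w (flip g i) < w g.

From HB Require Import structures.
From mathcomp Require Import all_boot all_order all_algebra.
From mathcomp Require Import lra.
Import Order.TTheory GRing.Theory Num.Theory.
Set Implicit Arguments.
Unset Strict Implicit.
Unset Printing Implicit Defensive.

(* An ordering of the loci gives a maximal flag of prefix sets, which is a
   staircase simplex and hence a cell: some affine function agrees with w on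
   the flag and lies strictly above w off it.  Taking the flag through g,
   i|:g and i|:(j|:g) but not j|:g, and using that affine functions are
   modular on the cube, gives w(i|:g) + w(j|:g) < w g + w(i|:(j|:g)): the
   fitness effect of a mutation grows with the genetic background.  A peak
   at l|:h makes the effect of l on h positive, a peak at h' containing h but
   not l makes its effect on h' negative, so the two peaks cannot coexist; all
   claims are instances of this. *)

Section Flags.

Variable L : nat.

Definition flag_of (s : seq 'I_L) : {set {set 'I_L}} :=
  [set [set:: take k s] | k : 'I_L.+1].

Lemma size_uniq_total (s : seq 'I_L) : uniq s -> (forall x, x \in s) -> size s = L.
Proof.
move=> s_uniq s_total; rewrite -[RHS](size_enum_ord L); apply/perm_size.
by apply: uniq_perm; rewrite ?enum_uniq // => x; rewrite s_total mem_enum.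
Qed.

Lemma card_set_take (s : seq 'I_L) k :
  uniq s -> k <= size s -> #|[set:: take k s]| = k.
Proof.
by move=> s_uniq le_k; rewrite cardsE (card_uniqP _) ?size_takel // take_uniq.
Qed.

Lemma set_take_cat (p r : seq 'I_L) n :
  [set:: take (size p + n) (p ++ r)] = [set:: p] :|: [set:: take n r].
Proof.
rewrite takeD take_size_cat // drop_size_cat //.
by apply/setP => x; rewrite !inE mem_cat.
Qed.

Variable s : seq 'I_L.
Hypotheses (s_uniq : uniq s) (s_size : size s = L).

Lemma staircase_flag_of : staircase_simplex (flag_of s).
Proof.
exists (fun k : 'I_L.+1 => [set:: take k s]); split; last split => //.
- by move=> k; rewrite card_set_take // s_size -ltnS.
- move=> k l le_kl; apply/subsetP => x; rewrite !inE -(take_takel s le_kl).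
  exact: mem_take.
Qed.

Lemma mem_flag_of k : k <= size s -> [set:: take k s] \in flag_of s.
Proof.
by rewrite s_size => le_kL; apply/imsetP; exists (inord k); rewrite ?inordK.
Qed.

Lemma flag_of_take_card h : h \in flag_of s -> h = [set:: take #|h| s].
Proof.
case/imsetP => k _ ->; rewrite card_set_take // s_size -ltnS //.
Qed.

End Flags.

Local Open Scope ring_scope.

Definition fitness_effect (R : realFieldType) (L : nat) (w : {set 'I_L} -> R)
  (l : 'I_L) (g : {set 'I_L}) : R := w (l |: g) - w g.

Lemma aff_atU1 (R : realFieldType) (L : nat) (a : 'I_L -> R) b
    (g : {set 'I_L}) i :
  i \notin g -> aff_at a b (i |: g) = aff_at a b g + a i.
Proof. by move=> ig; rewrite /aff_at big_setU1 //= addrCA addrC. Qed.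

Lemma peak_fitness_effect_lt0 (R : realFieldType) (L : nat)
    (w : {set 'I_L} -> R) g l :
  is_peak w g -> l \notin g -> fitness_effect w l g < 0.
Proof. by move=> /(_ l) + lg; rewrite /flip (negbTE lg) subr_lt0. Qed.

Lemma peak_fitness_effect_gt0 (R : realFieldType) (L : nat)
    (w : {set 'I_L} -> R) h l :
  is_peak w (l |: h) -> l \notin h -> 0 < fitness_effect w l h.
Proof. by move=> /(_ l) + lh; rewrite /flip setU11 setU1K // subr_gt0. Qed.

Section StaircaseLandscape.

Variables (R : realFieldType) (L : nat) (w : {set 'I_L} -> R).
Hypothesis w_staircase : induces_staircase w.

Lemma flag_of_cell (s : seq 'I_L) : uniq s -> size s = L ->
  exists a b, (forall g, w g <= aff_at a b g) /\
              (forall g, (aff_at a b g == w g) = (g \in flag_of s)).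
Proof.
move=> s_uniq s_size.
have [[a [b [w_le ->]]] _] := (w_staircase _).2 (staircase_flag_of s_uniq s_size).
by exists a, b; split=> // g; rewrite inE.
Qed.

Lemma fitness_effect_flag_lt (p q : seq 'I_L) i j :
  uniq (p ++ i :: j :: q) -> size (p ++ i :: j :: q) = L ->
  fitness_effect w i [set:: p] < fitness_effect w i (j |: [set:: p]).
Proof.
set s := p ++ _ => s_uniq s_size; set g := [set:: p].
have [a [b [w_le w_eq]]] := flag_of_cell s_uniq s_size.
move: (s_uniq); rewrite cat_uniq => /and3P [p_uniq ijp ijq].
have [ip jp] : i \notin p /\ j \notin p.
  by move: ijp; rewrite /= !negb_or => /and3P [].
have ij : i != j.
  by move: ijq; rewrite /= inE negb_or => /and3P [/andP [-> _]].
have on_flag n h : (n <= 2)%N -> g :|: [set:: take n (i :: j :: q)] = h ->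
    w h = aff_at a b h.
  move=> le_n2 <-; apply/eqP; rewrite eq_sym w_eq -set_take_cat.
  by apply: (mem_flag_of s_size); rewrite size_cat leq_add2l (leq_trans le_n2).
have w_g : w g = aff_at a b g by apply: (on_flag 0%N); rewrite //= set_nil setU0.
have w_ig : w (i |: g) = aff_at a b (i |: g).
  by apply: (on_flag 1%N); rewrite //=; apply/setP => x; rewrite !inE orbC.
have w_ijg : w (i |: (j |: g)) = aff_at a b (i |: (j |: g)).
  apply: (on_flag 2%N); rewrite //=; apply/setP => x.
  by rewrite !inE take0 in_nil orbF orbC -orbA.
have card_g : #|g| = size p by rewrite cardsE (card_uniqP p_uniq).
have w_jg : w (j |: g) < aff_at a b (j |: g).
  rewrite lt_neqAle w_le andbT eq_sym w_eq.
  apply/negP => /(flag_of_take_card s_uniq s_size).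
  rewrite cardsU1 inE (negbTE jp) card_g add1n -addn1 set_take_cat => /setP /(_ j).
  by rewrite !inE eqxx (negbTE jp) eq_sym (negbTE ij).
have ijg : i \notin j |: g by rewrite !inE negb_or ij.
have ig : i \notin g by rewrite inE.
have jg : j \notin g by rewrite inE.
move: w_jg; rewrite /fitness_effect w_g w_ig w_ijg !aff_atU1 //; lra.
Qed.

Lemma fitness_effect_ltU1 (g : {set 'I_L}) i j :
  i \notin g -> j \notin g -> i != j ->
  fitness_effect w i g < fitness_effect w i (j |: g).
Proof.
move=> ig jg ij.
pose s := enum g ++ i :: j :: enum (~: (i |: (j |: g))).
have s_uniq : uniq s.
  rewrite cat_uniq /= !enum_uniq !mem_enum !inE (negbTE ig) (negbTE jg).
  rewrite (negbTE ij) eqxx /= !orbT /= andbT mem_enum !inE eqxx andbT.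
  by apply/hasPn => x; rewrite !mem_enum !inE !negb_or => /and3P [].
have s_total x : x \in s.
  rewrite mem_cat !inE !mem_enum !inE.
  by case: (x \in g); case: (x == i); case: (x == j).
have := fitness_effect_flag_lt s_uniq (size_uniq_total s_uniq s_total).
by rewrite set_enum.
Qed.

Lemma fitness_effect_mono l (h h' : {set 'I_L}) : h \subset h' -> l \notin h' ->
  fitness_effect w l h <= fitness_effect w l h'.
Proof.
move=> + lh'; move: {2}#|h' :\: h| (erefl #|h' :\: h|) => n.
elim: n h => [|n IH] h card_h'h hh'.
  have -> // : h = h'.
  by apply/eqP; rewrite eqEsubset hh' -setD_eq0 -cards_eq0 card_h'h.
have [j] : exists j, j \in h' :\: h by apply/set0Pn; rewrite -card_gt0 card_h'h.
rewrite inE => /andP [jh jh'].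
have lh : l \notin h := contra (subsetP hh' l) lh'.
have lj : l != j by apply: contraNneq lh' => ->.
apply: le_trans (IH (j |: h) _ _); first exact/ltW/fitness_effect_ltU1.
  move: card_h'h; rewrite (cardsD1 j) inE jh jh' add1n => -[<-].
  by rewrite setUC -setDDl.
by rewrite subUset sub1set jh' hh'.
Qed.

Lemma no_nested_peaks l (h h' : {set 'I_L}) : h \subset h' -> l \notin h' ->
  ~ (is_peak w (l |: h) /\ is_peak w h').
Proof.
move=> hh' lh' [peak_lh peak_h'].
have lh : l \notin h := contra (subsetP hh' l) lh'.
have := fitness_effect_mono hh' lh'; rewrite leNgt.
have lt0 := peak_fitness_effect_lt0 peak_h' lh'.
by rewrite (lt_trans lt0 (peak_fitness_effect_gt0 peak_lh lh)).
Qed.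

End StaircaseLandscape.

Theorem lemma1 (R : realFieldType) (L : nat) (w : {set 'I_L} -> R) :
  (forall g, 0 <= w g) -> generic w -> induces_staircase w ->
  [/\ (forall (i : 'I_L) (g : {set 'I_L}),
         is_peak w [set i] -> is_peak w g -> g != [set i] -> i \in g),
      (forall i j : 'I_L, i != j -> ~ (is_peak w [set i] /\ is_peak w [set j])),
      (forall i j k : 'I_L, i != j -> j != k -> i != k ->
         ~ (is_peak w [set i; j] /\ is_peak w [set j; k])) &
      (forall i j k l : 'I_L, i != j -> i != k -> i != l -> j != k -> j != l -> k != l ->
         ~ (is_peak w [set i; j; k] /\ is_peak w [set k; l]))].
Proof.
move=> _ _ w_staircase.
have nested := no_nested_peaks w_staircase.
have single_peak i g : is_peak w [set i] -> is_peak w g -> i \in g.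
  move=> peak_i peak_g; apply/negPn/negP => ig.
  by apply: (nested i set0 g (sub0set g) ig); rewrite setU0; split.
split.
- by move=> i g peak_i peak_g _; apply: single_peak.
- by move=> i j ij [/single_peak in_peak /in_peak]; rewrite inE (negbTE ij).
- move=> i j k ij _ ik; apply: (nested i [set j] [set j; k]); first exact: subsetUl.
  by rewrite !inE negb_or ij ik.
- move=> i j k l _ _ il _ jl kl [peak_ijk peak_kl].
  apply: (nested l [set k] [set i; j; k]); first by rewrite sub1set !inE eqxx !orbT.
    by rewrite !inE !(eq_sym l) (negbTE il) (negbTE jl) (negbTE kl).
  by rewrite setUC; split.
Qed.
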